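(* Let $L\ge2$, $i^*\in\{1,\dots,L-1\}$, $N\ge d_x$, and $X_\epsilon$ of rank $d_x$. Let $F:\mathbb R^{d_x}\to\mathbb R^{d_{i^*}}$ be any function, $F(X)\in\mathbb R^{d_{i^*}\times N}$ the matrix with columns $F(x_i)$, and $\tilde W\in\mathbb R^{d_y\times d_{i^*}}$ with $\tilde WF(X)=Y$. Assume $p\ge\mathrm{rank}\big(YX_\epsilon^T(X_\epsilon X_\epsilon^T)^{-1}\big)$ and $\min_{0\le i\le i^*}d_i\ge\mathrm{rank}\big(F(X)X_\epsilon^T(X_\epsilon X_\epsilon^T)^{-1}\big)$. Consider the loss $$\mathcal L_{st}^F(W_L,\dots,W_1)=\|W_{L:1}X_\epsilon-Y\|_F^2+\lambda\|W_{i^*:1}X_\epsilon-F(X)\|_F^2 .$$ Then every global minimizer of $\mathcal L_{base}$ and every global minimizer of $\mathcal L_{st}^F$ have end-to-end matrix $W_{L:1}=YX_\epsilon^T(X_\epsilon X_\epsilon^T)^{-1}$.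
   Context: Clean inputs $x_i\in\mathbb R^{d_x}$, targets $y_i\in\mathbb R^{d_y}$, noise $\epsilon_i\in\mathbb R^{d_x}$, $i=1,\dots,N$; $X_\epsilon$ has columns $x_i+\epsilon_i$, $Y\in\mathbb R^{d_y\times N}$ has columns $y_i$. A deep linear network with $L$ layers is a tuple $(W_L,\dots,W_1)$ with $W_i\in\mathbb R^{d_i\times d_{i-1}}$, $d_0=d_x$, $d_L=d_y$; $W_{i:j}:=W_iW_{i-1}\cdots W_j$; $p:=\min_{0\le i\le L}d_i$. Base loss: $\mathcal L_{base}(W_L,\dots,W_1)=\|W_{L:1}X_\epsilon-Y\|_F^2$. $\lambda>0$ is fixed. *)

From mathcomp Require Import all_boot all_order all_algebra.
Set Implicit Arguments. Unset Strict Implicit. Unset Printing Implicit Defensive.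
Import Order.TTheory GRing.Theory Num.Theory.
Local Open Scope ring_scope.

(* A deep linear network with layer widths d : nat -> nat (d 0 = d_x, d L = d_y):
   layer k+1 is  W k : 'M_(d k.+1, d k)   (i.e. W_{k+1} in the paper).
   Layers with index >= L are irrelevant to every quantity below. *)
Definition network (R : realFieldType) (d : nat -> nat) :=
  forall k : nat, 'M[R]_(d k.+1, d k).

Fixpoint e2e (R : realFieldType) (d : nat -> nat) (W : network R d) (k : nat)
  : 'M[R]_(d k, d 0) :=
  match k with
  | 0 => 1%:M
  | k'.+1 => W k' *m e2e W k'
  end.

Definition frob2 (R : realFieldType) m n (A : 'M[R]_(m, n)) : R :=
  \sum_(i < m) \sum_(j < n) (A i j) ^+ 2.

Definition mindim (d : nat -> nat) (k : nat) : nat :=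
  \big[minn/d 0]_(i < k.+1) d i.

Definition applyF (R : realFieldType) (a b N : nat)
  (F : 'cV[R]_a -> 'cV[R]_b) (X : 'M[R]_(a, N)) : 'M[R]_(b, N) :=
  \matrix_(r < b, j < N) F (col j X) r 0.

Definition loss_base (R : realFieldType) d L N
  (Xe : 'M[R]_(d 0, N)) (Y : 'M[R]_(d L, N)) (W : network R d) : R :=
  frob2 (e2e W L *m Xe - Y).

Definition loss_st (R : realFieldType) d L istar N (lambda : R)
  (Xe : 'M[R]_(d 0, N)) (Y : 'M[R]_(d L, N)) (FX : 'M[R]_(d istar, N))
  (W : network R d) : R :=
  frob2 (e2e W L *m Xe - Y) + lambda * frob2 (e2e W istar *m Xe - FX).

Definition global_min (R : realFieldType) d (f : network R d -> R)
  (W : network R d) : Prop :=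
  forall W' : network R d, f W <= f W'.

From mathcomp Require Import all_boot all_order all_algebra.
From mathcomp Require Import lra.
Import Order.TTheory GRing.Theory Num.Theory.
Set Implicit Arguments. Unset Strict Implicit. Unset Printing Implicit Defensive.
Local Open Scope ring_scope.

(* Write Xe := X + E; since Xe has full row rank its Gram matrix
   Xe Xe^T is invertible, and for every target T the least-squares solution
   lsq Xe T := T Xe^T (Xe Xe^T)^-1 satisfies the Pythagorean identity
     |A Xe - T|^2 = |(A - lsq Xe T) Xe|^2 + |lsq Xe T Xe - T|^2 .
   Hence lsq Xe T is the unique minimizer of A |-> |A Xe - T|^2.
   Second, every matrix whose rank is at most all the widths of a segment of
   layers is realized by that segment (factor it through its rank), and two
   segments can be stacked.  For L_base, a network realizing lsq Xe Y attains
   the least-squares minimum, so every global minimizer has W_{L:1} = lsq Xe Y.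
   For L_st, since Y = W~ F(X), lsq Xe Y = W~ lsq Xe F(X), and a network with
   W_{i*:1} = lsq Xe F(X) and W_{L:1} = lsq Xe Y attains the minimum of BOTH
   terms simultaneously; comparing with it forces the excess of the first term
   of any global minimizer to vanish. *)

Section LeastSquares.
Variable R : realFieldType.

Lemma frob2_tr m n (A : 'M[R]_(m, n)) : frob2 A = \tr (A *m A^T).
Proof.
rewrite /frob2 /mxtrace; apply: eq_bigr => i _; rewrite !mxE.
by apply: eq_bigr => j _; rewrite !mxE expr2.
Qed.

Lemma frob2_ge0 m n (A : 'M[R]_(m, n)) : 0 <= frob2 A.
Proof. by apply: sumr_ge0 => i _; apply: sumr_ge0 => j _; apply: sqr_ge0. Qed.

Lemma frob2_eq0 m n (A : 'M[R]_(m, n)) : frob2 A = 0 -> A = 0.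
Proof.
move=> /eqP; rewrite psumr_eq0 => [/allP rows0|i _]; last first.
  by apply: sumr_ge0 => j _; apply: sqr_ge0.
apply/matrixP => i j; rewrite mxE.
move: (rows0 i (mem_index_enum _)) => /implyP/(_ isT).
rewrite psumr_eq0 => [/allP entries0|k _]; last exact: sqr_ge0.
move: (entries0 j (mem_index_enum _)) => /implyP/(_ isT).
by rewrite sqrf_eq0 => /eqP.
Qed.

Lemma frob2D_orth m n (U V : 'M[R]_(m, n)) :
  U *m V^T = 0 -> frob2 (U + V) = frob2 U + frob2 V.
Proof.
move=> UV0; have VU0 : V *m U^T = 0 by rewrite -[V]trmxK -trmx_mul UV0 trmx0.
by rewrite !frob2_tr linearD /= mulmxDl !mulmxDr UV0 VU0 addr0 add0r mxtraceD.
Qed.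

Lemma gram_unit n N (Xe : 'M[R]_(n, N)) : row_free Xe -> Xe *m Xe^T \in unitmx.
Proof.
move=> freeXe; rewrite -row_free_unit; apply: inj_row_free => v vG0.
have : frob2 (v *m Xe) = 0.
  by rewrite frob2_tr trmx_mul mulmxA -(mulmxA v) vG0 mul0mx mxtrace0.
by move/frob2_eq0/eqP; rewrite mulmx_free_eq0 // => /eqP.
Qed.

Definition lsq n N m (Xe : 'M[R]_(n, N)) (T : 'M[R]_(m, N)) : 'M[R]_(m, n) :=
  T *m Xe^T *m invmx (Xe *m Xe^T).

Lemma lsq_decomp n N m (Xe : 'M[R]_(n, N)) (T : 'M[R]_(m, N)) (A : 'M[R]_(m, n)) :
  row_free Xe ->
  frob2 (A *m Xe - T) =
  frob2 ((A - lsq Xe T) *m Xe) + frob2 (lsq Xe T *m Xe - T).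
Proof.
move=> freeXe; set S := Xe *m Xe^T; set M := lsq Xe T.
have -> : A *m Xe - T = (A - M) *m Xe + (M *m Xe - T).
  by rewrite mulmxBl addrA subrK.
apply: frob2D_orth.
have ST : S^T = S by rewrite /S trmx_mul trmxK.
have MT : M^T = invmx S *m Xe *m T^T.
  by rewrite /M /lsq !trmx_mul trmx_inv ST trmxK mulmxA.
rewrite linearB /= trmx_mul MT -mulmxA mulmxBr !mulmxA.
by rewrite mulmxV ?gram_unit // mul1mx subrr mulmx0.
Qed.

Lemma lsq_excess_eq0 n N m (Xe : 'M[R]_(n, N)) (T : 'M[R]_(m, N)) (A : 'M[R]_(m, n)) :
  row_free Xe -> frob2 ((A - lsq Xe T) *m Xe) = 0 -> A = lsq Xe T.
Proof.
by move=> freeXe /frob2_eq0/eqP; rewrite mulmx_free_eq0 // subr_eq0 => /eqP.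
Qed.

Lemma lsq_unique_min n N m (Xe : 'M[R]_(n, N)) (T : 'M[R]_(m, N)) (A : 'M[R]_(m, n)) :
  row_free Xe -> frob2 (A *m Xe - T) <= frob2 (lsq Xe T *m Xe - T) ->
  A = lsq Xe T.
Proof.
move=> freeXe; rewrite lsq_decomp // => le_opt; apply: lsq_excess_eq0 => //.
by apply/eqP; rewrite eq_le frob2_ge0 andbT; lra.
Qed.

End LeastSquares.

Section Realization.
Variable R : realFieldType.
Variable d : nat -> nat.

(* Layers of a segment a..b realizing C *m B through an r-dimensional
   bottleneck: layer a applies B, layer b-1 applies C, and the layers in
   between are the canonical embeddings/projections pid_mx r.  The factor
   pid_mx (d b) only transports C to the type 'M_(d j, r); it is the identity
   when j = b. *)
Definition embed_at r b (C : 'M[R]_(d b, r)) j : 'M[R]_(d j, r) :=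
  if j == b then pid_mx (d b) *m C else pid_mx r.
Definition proj_at r a (B : 'M[R]_(r, d a)) j : 'M[R]_(r, d j) :=
  if j == a then B *m pid_mx (d a) else pid_mx r.

Definition segment_layer r a b (C : 'M[R]_(d b, r)) (B : 'M[R]_(r, d a)) j :
  'M[R]_(d j.+1, d j) := embed_at C j.+1 *m proj_at B j.

Lemma embed_at_eq r b C : @embed_at r b C b = C.
Proof. by rewrite /embed_at eqxx pid_mx_1 mul1mx. Qed.
Lemma embed_at_neq r b C j : j != b -> @embed_at r b C j = pid_mx r.
Proof. by rewrite /embed_at => /negbTE ->. Qed.
Lemma proj_at_eq r a B : @proj_at r a B a = B.
Proof. by rewrite /proj_at eqxx pid_mx_1 mulmx1. Qed.
Lemma proj_at_neq r a B j : j != a -> @proj_at r a B j = pid_mx r.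
Proof. by rewrite /proj_at => /negbTE ->. Qed.

Lemma pid_mx_retract r n : (r <= n)%N ->
  (pid_mx r : 'M[R]_(r, n)) *m (pid_mx r : 'M_(n, r)) = 1%:M.
Proof. by move=> le_rn; rewrite mul_pid_mx minnn (minn_idPr le_rn) pid_mx_1. Qed.

Lemma segment_e2e (W : network R d) r a b (C : 'M[R]_(d b, r)) (B : 'M[R]_(r, d a)) :
  (forall j, (a <= j < b)%N -> W j = segment_layer C B j) ->
  (forall j, (a <= j <= b)%N -> (r <= d j)%N) ->
  forall k, (a < k <= b)%N -> e2e W k = embed_at C k *m B *m e2e W a.
Proof.
move=> layerW wide; elim=> [//|k IH] /andP[ak kb].
rewrite /= layerW; last by rewrite -ltnS ak kb.
rewrite /segment_layer; have [<-|ak'] := eqVneq a k.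
  by rewrite proj_at_eq.
have lt_ak : (a < k)%N by rewrite ltn_neqAle ak' -ltnS ak.
rewrite IH ?lt_ak ?(ltnW kb) // proj_at_neq; last by rewrite eq_sym.
rewrite (@embed_at_neq _ _ _ k) ?ltn_eqF // -!mulmxA (mulmxA (pid_mx r)).
by rewrite pid_mx_retract ?mul1mx // wide ?(ltnW lt_ak) ?(ltnW kb).
Qed.

Lemma realize_low_rank L (M : 'M[R]_(d L, d 0)) :
  (0 < L)%N -> (forall i, (i <= L)%N -> (\rank M <= d i)%N) ->
  exists W : network R d, e2e W L = M.
Proof.
move=> L0 wide; exists (segment_layer (col_base M) (row_base M)).
by rewrite (@segment_e2e _ _ 0 L (col_base M) (row_base M)) ?L0 //= embed_at_eq
  mulmx1 mulmx_base.
Qed.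

Lemma realize_two_stage s L (P : 'M[R]_(d s, d 0)) (Q : 'M[R]_(d L, d s)) :
  (0 < s)%N -> (s < L)%N ->
  (forall i, (i <= s)%N -> (\rank P <= d i)%N) ->
  (forall i, (s <= i <= L)%N -> (\rank Q <= d i)%N) ->
  exists W : network R d, e2e W s = P /\ e2e W L = Q *m P.
Proof.
move=> s0 sL wideP wideQ.
pose W : network R d := fun k =>
  if (k < s)%N then segment_layer (col_base P) (row_base P) k
  else segment_layer (col_base Q) (row_base Q) k.
have eS : e2e W s = P.
  rewrite (@segment_e2e _ _ 0 s (col_base P) (row_base P)) ?s0 //=.
    by rewrite embed_at_eq mulmx1 mulmx_base.
  by move=> j js; rewrite /W js.
exists W; split => //.
rewrite (@segment_e2e _ _ s L (col_base Q) (row_base Q)) ?sL ?leqnn //.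
- by rewrite embed_at_eq eS mulmx_base.
- by move=> j /andP[sj jL]; rewrite /W ltnNge sj.
Qed.

End Realization.

Lemma mindim_le (d : nat -> nat) k i : (i <= k)%N -> (mindim d k <= d i)%N.
Proof.
rewrite -ltnS => lt_ik.
exact: (@bigmin_le _ nat _ (d 0) (Ordinal lt_ik) (fun j : 'I_k.+1 => d j)).
Qed.

Theorem mainTheorem9 (R : realFieldType) (d : nat -> nat) (L istar N : nat)
  (lambda : R) (X E : 'M[R]_(d 0, N)) (Y : 'M[R]_(d L, N))
  (F : 'cV[R]_(d 0) -> 'cV[R]_(d istar)) :
  (2 <= L)%N -> (1 <= istar)%N -> (istar < L)%N -> 0 < lambda ->
  (d 0 <= N)%N ->
  \rank ((X + E)%R) = d 0 ->
  (exists Wt : 'M[R]_(d L, d istar), Wt *m applyF F X = Y) ->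
  (\rank (Y *m (X + E)^T *m invmx ((X + E) *m (X + E)^T)) <= mindim d L)%N ->
  (\rank (applyF F X *m (X + E)^T *m invmx ((X + E) *m (X + E)^T))
     <= mindim d istar)%N ->
  (forall W : network R d, global_min (loss_base (X + E) Y) W ->
     e2e W L = Y *m (X + E)^T *m invmx ((X + E) *m (X + E)^T)) /\
  (forall W : network R d,
     global_min (loss_st lambda (X + E) Y (applyF F X)) W ->
     e2e W L = Y *m (X + E)^T *m invmx ((X + E) *m (X + E)^T)).
Proof.
move=> _ istar0 istarL lambda0 _ rankXe [Wt WtFX] rankM rankG.
set Xe := X + E in rankXe *; set FX := applyF F X in WtFX rankG *.
have freeXe : row_free Xe by rewrite /row_free rankXe.
rewrite -/(lsq Xe Y) in rankM *; rewrite -/(lsq Xe FX) in rankG.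
have M_WtG : lsq Xe Y = Wt *m lsq Xe FX by rewrite /lsq -WtFX !mulmxA.
have wideM i : (i <= L)%N -> (\rank (lsq Xe Y) <= d i)%N.
  by move=> /(mindim_le d)/(leq_trans rankM).
split=> W minW.
- have [W0 W0L] := @realize_low_rank R d L (lsq Xe Y) (ltn_trans istar0 istarL) wideM.
  by apply: lsq_unique_min => //; move: (minW W0); rewrite /loss_base W0L.
- (* the second stage V maps lsq Xe F(X) to lsq Xe Y; it exists since Y = W~ F(X) *)
  pose V := lsq Xe Y *m pinvmx (lsq Xe FX).
  have VG : V *m lsq Xe FX = lsq Xe Y by rewrite mulmxKpV // M_WtG submxMl.
  have [W0 [W0s W0L]] := @realize_two_stage R d istar L (lsq Xe FX) V istar0 istarL
    (fun i le_is => leq_trans rankG (mindim_le d le_is))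
    (fun i bounds => leq_trans (mxrankM_maxl _ _) (wideM i (proj2 (andP bounds)))).
  move: (minW W0); rewrite /loss_st W0s W0L VG (lsq_decomp _ (e2e W L) freeXe)
    (lsq_decomp _ (e2e W istar) freeXe).
  move: (frob2_ge0 ((e2e W L - lsq Xe Y) *m Xe)) => excess_ge0.
  move: (mulr_ge0 (ltW lambda0) (frob2_ge0 ((e2e W istar - lsq Xe FX) *m Xe))).
  rewrite mulrDr => penalty_ge0 le_opt; apply: lsq_excess_eq0 => //.
  by apply/eqP; rewrite eq_le excess_ge0 andbT; lra.
Qed.
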